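(* Let $u$ be a nondecreasing packed word and let $v,v'$ be packed words with $\mathrm{WC}(v')=\mathrm{WC}(v)$. Then $\zeta(\mathbf M_u\star_q\mathbf M_v)=\zeta(\mathbf M_u\star_q\mathbf M_{v'})$.
   Context: Over $\mathbb K(q)$ ($\mathrm{char}\,\mathbb K=0$): packed words are words with letter set $\{1,\dots,m\}$; $\mathrm{pack}$ replaces the $t$-th smallest letter by $t$. For a packed word $w$ of length $N$: $\mathrm{WC}(w)$ is the composition of $N$ whose descent set (set of partial sums other than $N$) is the set of positions $p<N$ with $w_p$ not occurring in $w_{p+1}\cdots w_N$; $\mathrm{sinv}(w)=\#\{i<j:w_i>w_j,\ w_j\text{ not occurring in }w_{j+1}\cdots w_N\}$. $\mathbf{WQSym}$ has basis $\mathbf M_u$ with $\mathbf M_{u'}\mathbf M_{u''}=\sum\mathbf M_z$ over packed $z=x\cdot y$ with $\mathrm{pack}(x)=u'$, $\mathrm{pack}(y)=u''$; $\mathbf M_{u'}\star_q\mathbf M_{u''}=\sum q^{\mathrm{sinv}(z)-\mathrm{sinv}(u')-\mathrm{sinv}(u'')}\mathbf M_z$ over the same $z$. $\zeta$ is the quotient map from $\mathbf{WQSym}$ to its quotient by the span of all $\mathbf M_z-\mathbf M_{z'}$ with $\mathrm{WC}(z)=\mathrm{WC}(z')$. *)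

From HB Require Import structures.
From mathcomp Require Import all_boot all_order all_algebra.
Set Implicit Arguments. Unset Strict Implicit. Unset Printing Implicit Defensive.
Import Order.TTheory GRing.Theory Num.Theory.
Local Open Scope ring_scope.

(* Words are sequences of positive naturals (letters). *)
Definition word := seq nat.

Definition maxl (w : word) : nat := foldr maxn 0%N w.

Definition packed (w : word) : bool :=
  (0%N \notin w) && all (fun i => i \in w) (iota 1 (maxl w)).

Definition pack (w : word) : word :=
  map (fun x => (index x (sort leq (undup w))).+1) w.

(* Descent positions p (1-indexed, p < N) with w_p not occurring in w_{p+1}...w_N *)
Definition WCdes (w : word) : seq nat :=
  [seq p <- iota 1 (size w).-1 | nth 0%N w p.-1 \notin drop p w].

(* the composition of N = size w whose descent set (partial sums < N) is WCdes w *)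
Definition WC (w : word) : seq nat :=
  if w is [::] then [::]
  else pairmap (fun a b => (b - a)%N) 0%N (rcons (WCdes w) (size w)).

Definition sinv (w : word) : nat :=
  \sum_(0 <= j < size w)
     if nth 0%N w j \notin drop j.+1 w then
       count (fun i => nth 0%N w j < nth 0%N w i)%N (iota 0 j)
     else 0%N.

Definition nondecreasing (w : word) : bool := sorted leq w.

(* The scalar field K(q), with q transcendental. *)
Definition Kq (K : fieldType) := {fraction {poly K}}.
Definition qv (K : fieldType) : Kq K := FracField.tofrac 'X.

(* Elements of WQSym are represented by their coefficient function
   z |-> coefficient of M_z (finitely supported on packed words). *)
Definition WQ (K : fieldType) := word -> Kq K.

Definition Mb (K : fieldType) (z : word) : WQ K := fun w => (w == z)%:R.

Definition starq (K : fieldType) (u1 u2 : word) : WQ K := fun z =>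
  if [&& packed z, size z == (size u1 + size u2)%N,
         pack (take (size u1) z) == u1 & pack (drop (size u1) z) == u2]
  then qv K ^ ((sinv z)%:Z - (sinv u1)%:Z - (sinv u2)%:Z)
  else 0.

(* zeta f = zeta g in the quotient of WQSym by
   span { M_z - M_z' : WC z = WC z' } :
   f - g is a finite linear combination of such differences. *)
Definition zeta_eq (K : fieldType) (f g : WQ K) : Prop :=
  exists s : seq (Kq K * word * word),
    (forall t, t \in s -> [&& packed t.1.2, packed t.2 & WC t.1.2 == WC t.2]) /\
    forall w, f w - g w = \sum_(t <- s) t.1.1 * (Mb K t.1.2 w - Mb K t.2 w).

From mathcomp Require Import all_boot all_order all_algebra.
From mathcomp Require Import zify.

Set Implicit Arguments.
Unset Strict Implicit.

(* A word z = x ++ y lies in the support of M_u *_q M_v iff pack x = u and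
   pack y = v.  Since WC v = WC v', the words v and v' have the same length and
   the same positions of last occurrences, hence the same number of distinct
   letters; so y can be replaced by the unique word y' with the same letters as
   y and pack y' = v'.  This is a bijection between the two supports.  It
   preserves WC, because which positions of x ++ y carry a last occurrence only
   depends on x, on the set of letters of y and on that pattern for y; and it
   shifts sinv by sinv v' - sinv v, because the inversions of x ++ y that are
   not inside y only depend on x and on the set of letters of y.  Hence the
   coefficients match and the two products differ by a combination of the
   M_z - M_z' with WC z = WC z'. *)

Definition last_occ (w : word) j := nth 0 w j \notin drop j.+1 w.

Lemma leq_mem_maxl w a : a \in w -> a <= maxl w.
Proof.
elim: w => //= b w IH; rewrite in_cons => /orP[/eqP->|/IH h].
  by rewrite leq_maxl.
by rewrite (leq_trans h) // leq_maxr.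
Qed.

Lemma maxl_subset w w' : {subset w <= w'} -> maxl w <= maxl w'.
Proof.
elim: w => //= b w IH sub; rewrite geq_max leq_mem_maxl ?sub ?mem_head //.
by apply: IH => x xw; apply: sub; rewrite in_cons xw orbT.
Qed.

Lemma eq_mem_packed w w' : w =i w' -> packed w = packed w'.
Proof.
move=> e; have hm : maxl w = maxl w'.
  by apply/eqP; rewrite eqn_leq !maxl_subset // => x; rewrite e.
by rewrite /packed hm e; congr (_ && _); apply: eq_all => x; rewrite e.
Qed.

Lemma mem_packed w a : packed w -> (a \in w) = (0 < a <= maxl w).
Proof.
case/andP=> w0 /allP w_all; apply/idP/idP => [aw|a_range].
  by rewrite leq_mem_maxl // andbT lt0n; apply: contraNneq w0 => <-.
by apply: w_all; rewrite mem_iota; lia.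
Qed.

Lemma size_undup_packed w : packed w -> size (undup w) = maxl w.
Proof.
move=> pw; rewrite -(size_iota 1 (maxl w)); apply: perm_size.
apply: uniq_perm; rewrite ?undup_uniq ?iota_uniq // => a.
by rewrite mem_undup mem_packed // mem_iota; lia.
Qed.

Lemma packed_maxl_leq_size w : packed w -> maxl w <= size w.
Proof. by move=> pw; rewrite -size_undup_packed // size_undup. Qed.

Lemma sum_last_occ (F : nat -> nat) w :
  \sum_(0 <= j < size w) (if last_occ w j then F (nth 0 w j) else 0) =
  \sum_(b <- undup w) F b.
Proof.
elim: w => [|a w IH]; first by rewrite big_geq // big_nil.
rewrite /last_occ in IH *; rewrite /= big_nat_recl //= drop0 IH.
by case: (a \in w); rewrite ?big_cons.
Qed.

Lemma size_undup_last_occ w :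
  size (undup w) = \sum_(0 <= j < size w) (if last_occ w j then 1 else 0).
Proof. by rewrite (sum_last_occ (fun=> 1)) sum1_size. Qed.

Lemma last_occ_oversize w j : size w <= j.+1 -> last_occ w j.
Proof. by move=> h; rewrite /last_occ drop_oversize. Qed.

Lemma last_occ_cat x y i : last_occ (x ++ y) i =
  if i < size x then nth 0 x i \notin drop i.+1 x ++ y
  else last_occ y (i - size x).
Proof.
rewrite /last_occ nth_cat drop_cat; case: (ltnP i (size x)) => h.
  by case: ltnP => // h2; rewrite (_ : i.+1 = size x) ?subnn ?drop0 ?drop_size //; lia.
by rewrite ltnNge (leq_trans h) // subSn.
Qed.

Lemma WCdes_last_occ w j : (j.+1 \in WCdes w) = (j.+1 < size w) && last_occ w j.
Proof.
rewrite mem_filter mem_iota /= andbC; congr (_ && _).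
by case: (size w) => //= n; rewrite add1n.
Qed.

Lemma scanl_pairmap_subn a s : sorted leq (a :: s) ->
  scanl addn a (pairmap (fun a b => b - a) a s) = s.
Proof. by elim: s a => //= b s IH a /andP[ab s_sorted]; rewrite subnKC // IH. Qed.

Lemma sorted_WCdes w : 0 < size w -> sorted leq (0 :: rcons (WCdes w) (size w)).
Proof.
move=> w_gt0; apply: (subseq_sorted leq_trans _ (iota_sorted 0 (size w).+1)).
have -> : iota 0 (size w).+1 = 0 :: rcons (iota 1 (size w).-1) (size w).
  by case: (size w) w_gt0 => // n _; rewrite -cats1 -(iotaD 1 n 1) addn1.
by rewrite /= -!cats1 cat_subseq // filter_subseq.
Qed.

Lemma eq_WC w w' :
  WC w = WC w' <-> size w = size w' /\ last_occ w =1 last_occ w'.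
Proof.
split; last first.
  case=> es el; have ed : WCdes w = WCdes w'.
    by rewrite /WCdes es; apply: eq_in_filter => -[|p]; rewrite ?mem_iota // => _; exact: el.
  by case: w es ed {el} => [|a w]; case: w' => [|b w'] //= es ed; rewrite /WC ed /= es.
case: w => [|a w]; case: w' => [|b w'] //; rewrite /WC.
- by move/(congr1 size); rewrite size_pairmap size_rcons.
- by move/(congr1 size); rewrite size_pairmap size_rcons.
move=> /(congr1 (scanl addn 0)).
rewrite !scanl_pairmap_subn ?sorted_WCdes // => /rcons_inj[ed es].
split=> [|j]; first by rewrite /= es.
case: (ltnP j.+1 (size (a :: w))) => h; last by rewrite !last_occ_oversize //= -es.
by have := WCdes_last_occ (a :: w) j; rewrite ed WCdes_last_occ /= -es h.
Qed.

Definition alphabet (y : word) : word := sort leq (undup y).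

Lemma mem_alphabet y x : (x \in alphabet y) = (x \in y).
Proof. by rewrite mem_sort mem_undup. Qed.

Lemma alphabet_uniq y : uniq (alphabet y).
Proof. by rewrite sort_uniq undup_uniq. Qed.

Lemma alphabet_sorted y : sorted leq (alphabet y).
Proof. exact: sort_sorted leq_total _. Qed.

Lemma size_alphabet y : size (alphabet y) = size (undup y).
Proof. exact: size_sort. Qed.

Lemma packE y : pack y = [seq (index x (alphabet y)).+1 | x <- y].
Proof. by []. Qed.

Lemma index_alphabet_inj y : {in y &, injective (index^~ (alphabet y))}.
Proof.
move=> a b ay yb e; rewrite -(nth_index 0 (_ : a \in alphabet y)) ?mem_alphabet //.
by rewrite e nth_index // mem_alphabet.
Qed.

Lemma ltn_index_alphabet y : {in y &, {mono index^~ (alphabet y) : a b / a < b}}.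
Proof.
move=> a b ay yb; have ay' : a \in alphabet y by rewrite mem_alphabet.
have yb' : b \in alphabet y by rewrite mem_alphabet.
have le_index := sorted_ltn_index leq_trans (alphabet_sorted y).
case: (ltngtP (index a _) (index b _)) => [lt_ab|lt_ba|/(@index_alphabet_inj y _ _ ay yb)->].
- have := le_index _ _ ay' yb' lt_ab; rewrite leq_eqVlt => /orP[/eqP eq_ab|//].
  by move: lt_ab; rewrite eq_ab ltnn.
- by apply/esym/negbTE; rewrite -leqNgt le_index.
- by rewrite ltnn.
Qed.

Lemma last_occ_pack y : last_occ (pack y) =1 last_occ y.
Proof.
move=> j; rewrite /last_occ packE; case: (ltnP j (size y)) => jy; last first.
  by rewrite !drop_oversize ?size_map // ltnW.
have inj : {in y &, injective (fun x => (index x (alphabet y)).+1)}.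
  by move=> a b ay yb [] /(@index_alphabet_inj y _ _ ay yb).
rewrite (nth_map 0) // -map_drop; congr negb; apply/mapP/idP => [[b b_drop e]|]; last first.
  by move=> h; exists (nth 0 y j).
by rewrite (inj _ _ (mem_nth 0 jy) (mem_drop b_drop) e).
Qed.

Lemma sinv_pack y : sinv (pack y) = sinv y.
Proof.
rewrite /sinv size_map; apply: eq_big_nat => j /andP[_ jy].
have := last_occ_pack y j; rewrite /last_occ => ->; case: ifP => // _.
apply: eq_in_count => i; rewrite mem_iota => /andP[_ ij].
rewrite packE !(nth_map 0) ?(ltn_trans ij) //.
by rewrite ltnS ltn_index_alphabet ?mem_nth ?(ltn_trans ij).
Qed.

Lemma sinv_cat x y : sinv (x ++ y) =
  \sum_(0 <= j < size x) (if nth 0 x j \notin drop j.+1 x ++ y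
                          then count (fun i => nth 0 x j < nth 0 x i) (iota 0 j) else 0)
  + \sum_(b <- undup y) count (fun i => b < nth 0 x i) (iota 0 (size x)) + sinv y.
Proof.
rewrite /sinv size_cat (@big_cat_nat _ _ _ (size x)) ?leq_addr //= -addnA.
congr (_ + _).
  apply: eq_big_nat => j /andP[_ jx]; have := last_occ_cat x y j.
  rewrite /last_occ jx nth_cat jx => ->; case: ifP => // _.
  by apply: eq_in_count => i; rewrite mem_iota nth_cat => /andP[_ /ltn_trans->].
have nth_cat_r k : nth 0 (x ++ y) (k + size x) = nth 0 y k.
  by rewrite nth_cat ltnNge leq_addl /= addnK.
rewrite -{1}[size x]add0n big_addn addKn -sum_last_occ -big_split /=.
apply: eq_big_nat => k /andP[_ ky].
have := last_occ_cat x y (k + size x); rewrite /last_occ ltnNge leq_addl /= addnK => ->.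
rewrite nth_cat_r; case: ifP => // _.
rewrite addnC iotaD count_cat add0n; congr (_ + _).
  by apply: eq_in_count => i; rewrite mem_iota /= => ix; rewrite nth_cat ix.
rewrite -{1}(addn0 (size x)) iotaDl count_map.
by apply: eq_count => i /=; rewrite addnC nth_cat_r.
Qed.

Lemma sinv_cat_eq_mem x y y' : y =i y' ->
  (sinv (x ++ y) + sinv y' = sinv (x ++ y') + sinv y)%N.
Proof.
move=> eq_y; rewrite !sinv_cat [\sum_(b <- undup y) _](perm_big (undup y')); last first.
  by apply: uniq_perm; rewrite ?undup_uniq // => b; rewrite !mem_undup eq_y.
rewrite (eq_bigr (fun j => if nth 0 x j \notin drop j.+1 x ++ y' then
  count (fun i => nth 0 x j < nth 0 x i) (iota 0 j) else 0)); last first.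
  by move=> j _; rewrite !mem_cat eq_y.
by rewrite -!addnA; congr (_ + (_ + _)); rewrite addnC.
Qed.

Lemma WC_cat_eq_mem x y y' : y =i y' -> size y = size y' ->
  last_occ y =1 last_occ y' -> WC (x ++ y) = WC (x ++ y').
Proof.
move=> eq_y es el; apply/eq_WC; split=> [|j]; first by rewrite !size_cat es.
by rewrite !last_occ_cat !mem_cat eq_y el.
Qed.

(* [unpack y w] is the word with the letters of [y] whose packing is [w],
   provided [w] is packed and has as many distinct letters as [y]. *)
Definition unpack (y w : word) : word := [seq nth 0 (alphabet y) c.-1 | c <- w].

Lemma unpack_pack y : unpack y (pack y) = y.
Proof.
rewrite /unpack packE -map_comp; apply: map_id_in => b yb /=.
by rewrite nth_index // mem_alphabet.
Qed.

Section Unpack.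

Variables y w : word.
Hypothesis w_packed : packed w.
Hypothesis size_yw : size y = size w.
Hypothesis last_occ_yw : last_occ y =1 last_occ w.

Lemma size_alphabet_maxl : size (alphabet y) = maxl w.
Proof.
rewrite size_alphabet -size_undup_packed // !size_undup_last_occ size_yw.
by apply: eq_big_nat => j _; rewrite last_occ_yw.
Qed.

Lemma mem_packed_alphabet c : (c \in w) = (0 < c) && (c.-1 < size (alphabet y)).
Proof. by rewrite mem_packed // size_alphabet_maxl; case: c. Qed.

Lemma mem_unpack : unpack y w =i y.
Proof.
move=> b; apply/mapP/idP => [[c cw ->]|yb].
  by move: cw; rewrite mem_packed_alphabet => /andP[_ /(mem_nth 0)]; rewrite mem_alphabet.
exists (index b (alphabet y)).+1; last by rewrite /= nth_index ?mem_alphabet.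
by rewrite mem_packed_alphabet /= index_mem mem_alphabet.
Qed.

Lemma alphabet_unpack : alphabet (unpack y w) = alphabet y.
Proof.
apply: (sorted_eq leq_trans anti_leq (alphabet_sorted _) (alphabet_sorted _)).
by apply: uniq_perm; rewrite ?alphabet_uniq // => b; rewrite !mem_alphabet mem_unpack.
Qed.

Lemma pack_unpack : pack (unpack y w) = w.
Proof.
rewrite packE alphabet_unpack -map_comp; apply: map_id_in => c /=.
by rewrite mem_packed_alphabet => /andP[c_gt0 c_lt]; rewrite index_uniq ?alphabet_uniq // prednK.
Qed.

Lemma last_occ_unpack : last_occ (unpack y w) =1 last_occ y.
Proof. by move=> j; rewrite -last_occ_pack pack_unpack last_occ_yw. Qed.

End Unpack.

Definition star_support (u v z : word) : bool :=
  [&& packed z, size z == (size u + size v)%N,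
      pack (take (size u) z) == u & pack (drop (size u) z) == v].

Definition transfer (n : nat) (w z : word) : word := take n z ++ unpack (drop n z) w.

Section Transfer.

Variables u v w : word.
Hypothesis w_packed : packed w.
Hypothesis size_vw : size v = size w.
Hypothesis last_occ_vw : last_occ v =1 last_occ w.

Variable z : word.
Hypothesis z_support : star_support u v z.

Let x := take (size u) z.
Let y := drop (size u) z.

Lemma size_support_take : size x = size u.
Proof. by case/and4P: z_support => _ /eqP sz _ _; rewrite size_take sz; case: ltnP; lia. Qed.

Lemma pack_support_drop : pack y = v.
Proof. by case/and4P: z_support => _ _ _ /eqP. Qed.

Lemma size_support_drop : size y = size w.
Proof. by rewrite -size_vw -pack_support_drop size_map. Qed.

Lemma last_occ_support_drop : last_occ y =1 last_occ w.
Proof. by move=> j; rewrite -last_occ_vw -pack_support_drop last_occ_pack. Qed.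

Let mem_unpack_y := mem_unpack w_packed size_support_drop last_occ_support_drop.
Let alphabet_unpack_y := alphabet_unpack w_packed size_support_drop last_occ_support_drop.
Let pack_unpack_y := pack_unpack w_packed size_support_drop last_occ_support_drop.
Let last_occ_unpack_y := last_occ_unpack w_packed size_support_drop last_occ_support_drop.

Lemma transferE : transfer (size u) w z = x ++ unpack y w.
Proof. by []. Qed.

Lemma take_transfer : take (size u) (transfer (size u) w z) = x.
Proof. by rewrite transferE -size_support_take take_size_cat. Qed.

Lemma drop_transfer : drop (size u) (transfer (size u) w z) = unpack y w.
Proof. by rewrite transferE -size_support_take drop_size_cat. Qed.

Lemma star_support_transfer : star_support u w (transfer (size u) w z).
Proof.
case/and4P: z_support => z_packed /eqP sz /eqP pack_x _.
have mem_transfer : transfer (size u) w z =i z.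
  by move=> b; rewrite transferE -[in RHS](cat_take_drop (size u) z) !mem_cat mem_unpack_y.
rewrite /star_support take_transfer drop_transfer pack_x pack_unpack_y !eqxx !andbT.
by rewrite (eq_mem_packed mem_transfer) z_packed transferE size_cat size_map size_support_take eqxx.
Qed.

Lemma transferK : transfer (size u) v (transfer (size u) w z) = z.
Proof.
rewrite /transfer take_transfer drop_transfer /unpack alphabet_unpack_y.
by rewrite -pack_support_drop -/(unpack y (pack y)) unpack_pack cat_take_drop.
Qed.

Lemma sinv_transfer : (sinv (transfer (size u) w z) + sinv v = sinv z + sinv w)%N.
Proof.
rewrite transferE -[in RHS](cat_take_drop (size u) z) -/x -/y.
rewrite -pack_support_drop sinv_pack -[in RHS]pack_unpack_y sinv_pack.
by apply: sinv_cat_eq_mem => b; rewrite mem_unpack_y.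
Qed.

Lemma WC_transfer : WC (transfer (size u) w z) = WC z.
Proof.
rewrite transferE -[in RHS](cat_take_drop (size u) z).
apply: WC_cat_eq_mem; [exact: mem_unpack_y | | exact: last_occ_unpack_y].
by rewrite size_map size_support_drop.
Qed.

End Transfer.

Fixpoint words_over (B k : nat) : seq word :=
  if k is k'.+1 then [seq a :: w | a <- iota 0 B.+1, w <- words_over B k'] else [:: [::]].

Lemma mem_words_over B w : all (leq^~ B) w -> w \in words_over B (size w).
Proof.
elim: w => [|a w IH] // /andP[aB wB].
change (a :: w \in [seq b :: w' | b <- iota 0 B.+1, w' <- words_over B (size w)]).
by apply: (allpairs_f (fun a w => a :: w)); rewrite ?mem_iota ?IH.
Qed.

Lemma star_support_words u v z :
  star_support u v z -> z \in words_over (size u + size v) (size u + size v).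
Proof.
case/and4P=> z_packed /eqP sz _ _; rewrite -{2}sz; apply/mem_words_over/allP => a az.
by rewrite -sz (leq_trans (leq_mem_maxl az)) // packed_maxl_leq_size.
Qed.

Import GRing.Theory.
Local Open Scope ring_scope.

Lemma sum_mul_indicator (R : pzSemiRingType) (r : seq word) (F : word -> R) w :
  uniq r -> \sum_(z <- r) F z * (w == z)%:R = if w \in r then F w else 0.
Proof.
elim: r => [|a r IH]; first by rewrite big_nil.
rewrite big_cons in_cons /= => /andP[a_notin r_uniq]; rewrite IH //.
case: eqP => [->|_]; last by rewrite mulr0 add0r.
by rewrite (negbTE a_notin) mulr1 addr0.
Qed.

Section Transport.

Variables (K : fieldType) (f g : WQ K) (P P' : pred word) (r : seq word).
Variables T S : word -> word.
Hypothesis f_support : forall z, ~~ P z -> f z = 0.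
Hypothesis g_support : forall w, ~~ P' w -> g w = 0.
Hypothesis P_finite : forall z, P z -> z \in r.
Hypothesis P_packed : forall z, P z -> packed z.
Hypothesis P'_packed : forall w, P' w -> packed w.
Hypothesis T_P : forall z, P z -> P' (T z).
Hypothesis S_P' : forall w, P' w -> P (S w).
Hypothesis TK : forall z, P z -> S (T z) = z.
Hypothesis SK : forall w, P' w -> T (S w) = w.
Hypothesis g_T : forall z, P z -> g (T z) = f z.
Hypothesis WC_T : forall z, P z -> WC (T z) = WC z.

Lemma zeta_eq_transport : zeta_eq f g.
Proof.
pose Z := undup (filter P r).
have mem_Z z : (z \in Z) = P z.
  by rewrite mem_undup mem_filter andb_idr // => /P_finite.
exists [seq (f z, z, T z) | z <- Z]; split.
  move=> t /mapP[z]; rewrite mem_Z => Pz -> /=.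
  by rewrite P_packed // P'_packed ?T_P // WC_T // eqxx.
move=> w; rewrite big_map; under eq_bigr do rewrite mulrBr.
rewrite sumrB /Mb sum_mul_indicator ?undup_uniq // mem_Z.
congr (_ - _); first by case: (boolP (P w)) => // /f_support.
case: (boolP (P' w)) => [P'w|not_P'w]; last first.
  rewrite g_support // big1_seq // => z; rewrite mem_Z => /andP[_ Pz].
  case: eqP => [w_Tz|_]; last by rewrite mulr0.
  by move: not_P'w; rewrite w_Tz T_P.
have -> : \sum_(z <- Z) f z * (w == T z)%:R = \sum_(z <- Z) f z * (S w == z)%:R.
  apply: eq_big_seq => z; rewrite mem_Z => Pz; congr (_ * (nat_of_bool _)%:R).
  by apply/idP/idP => [/eqP->|/eqP<-]; rewrite ?TK ?SK.
by rewrite sum_mul_indicator ?undup_uniq // mem_Z S_P' // -g_T ?S_P' ?SK.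
Qed.

End Transport.

Lemma starqE (K : fieldType) u v z : starq K u v z =
  if star_support u v z then qv K ^ ((sinv z)%:Z - (sinv u)%:Z - (sinv v)%:Z) else 0.
Proof. by []. Qed.

Lemma starq_support (K : fieldType) u v z : ~~ star_support u v z -> starq K u v z = 0.
Proof. by rewrite starqE => /negbTE->. Qed.

Lemma starq_transfer (K : fieldType) u v w z :
  packed w -> size v = size w -> last_occ v =1 last_occ w -> star_support u v z ->
  starq K u w (transfer (size u) w z) = starq K u v z.
Proof.
move=> w_packed size_vw last_occ_vw z_support.
rewrite !starqE z_support (star_support_transfer w_packed size_vw last_occ_vw z_support).
have sinv_eq := sinv_transfer w_packed size_vw last_occ_vw z_support.
by congr (_ ^ _); lia.
Qed.

Theorem mainTheorem18 (K : fieldType) (charK0 : [pchar K] =i pred0)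
  (u v v' : word) :
  packed u -> nondecreasing u -> packed v -> packed v' -> WC v' = WC v ->
  zeta_eq (starq K u v) (starq K u v').
Proof.
move=> _ _ v_packed v'_packed /esym/eq_WC[size_vv' last_occ_vv'].
have size_v'v := esym size_vv'.
have last_occ_v'v : last_occ v' =1 last_occ v by move=> j; rewrite last_occ_vv'.
apply: (zeta_eq_transport (P := star_support u v) (P' := star_support u v')
  (T := transfer (size u) v') (S := transfer (size u) v)) => //.
- exact: starq_support.
- exact: starq_support.
- exact: star_support_words.
- by move=> z /and4P[].
- by move=> w /and4P[].
- move=> z; exact/star_support_transfer.
- move=> w; exact/star_support_transfer.
- move=> z; exact/transferK.
- move=> w; exact/transferK.
- move=> z; exact/starq_transfer.
- move=> z; exact/WC_transfer.
Qed.
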